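(* Let $\kappa$ be a regular uncountable cardinal, $L=\{\lambda+1:\lambda<\kappa\text{ a limit ordinal}\}$, $W=\{\lambda<\kappa:\operatorname{cf}\lambda=\omega\}$, and let $I$ be the ideal generated by $I_\kappa\cup\{W\}$. Suppose $A\subseteq L\setminus\{\lambda+1:\lambda\in W\}$ and $B(A)=\{\lambda:\lambda+1\in A\}$ is stationary. Then $A\notin P(I)$.
   Context: An ideal on $\kappa$ is a family of subsets of $\kappa$ closed under subsets and finite unions, which is $<\kappa$-complete and contains all singletons; $I_\kappa=\{X\subseteq\kappa:|X|<\kappa\}$. For $A\subseteq\kappa$ and $X_\alpha\subseteq\kappa$, $\bigtriangledown_{\alpha\in A}X_\alpha=\{\xi<\kappa:\exists\alpha<\xi\,(\alpha\in A\wedge \xi\in X_\alpha)\}$. An ideal is pleasant if whenever $A$ and all $X_\alpha$ belong to it, so does $\bigtriangledown_{\alpha\in A}X_\alpha$. The pleasant closure $P(I)$ is built in stages: $P_0(I)=I$; $P_{\beta+1}(I)$ is the ideal generated by $P_\beta(I)$ together with all $\bigtriangledown_{\alpha\in T}X_\alpha$ with $T\in I$ and each $X_\alpha\in P_\beta(I)$; unions at limit stages; $P(I)=\bigcup_\beta P_\beta(I)$ (the smallest pleasant ideal containing $I$). *)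

(* The cardinal kappa is modelled as a type T
   carrying a strict well-order [lt] whose order type is a regular
   uncountable cardinal; subsets of kappa are predicates T -> Prop. *)

Section KappaDefs.
Variable T : Type.
Variable lt : T -> T -> Prop.

Definition le (a b : T) : Prop := lt a b \/ a = b.

Definition card_lt_kappa (X : T -> Prop) : Prop :=
  ~ exists f : T -> {x : T | X x}, forall a b, f a = f b -> a = b.

Definition unbounded (X : T -> Prop) : Prop :=
  forall a, exists x, X x /\ lt a x.

Definition regular_uncountable_cardinal : Prop :=
  (forall a, ~ lt a a) /\
  (forall a b c, lt a b -> lt b c -> lt a c) /\
  (forall a b, lt a b \/ a = b \/ lt b a) /\
  well_founded lt /\
  (* a cardinal: every proper initial segment has smaller cardinality *)
  (forall a, card_lt_kappa (fun x => lt x a)) /\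
  (~ exists f : T -> nat, forall a b, f a = f b -> a = b) /\
  (* regular: every unbounded subset has cardinality kappa *)
  (forall X, unbounded X -> ~ card_lt_kappa X).

Definition is_limit (l : T) : Prop :=
  (exists a, lt a l) /\ (forall a, lt a l -> exists b, lt a b /\ lt b l).

Definition is_succ (l s : T) : Prop :=
  lt l s /\ forall c, lt l c -> le s c.

Definition Lset (s : T) : Prop := exists l, is_limit l /\ is_succ l s.

Definition cof_omega (l : T) : Prop :=
  exists f : nat -> T,
    (forall n, lt (f n) (f (S n))) /\ (forall n, lt (f n) l) /\
    (forall a, lt a l -> exists n, lt a (f n)).

Definition Wset (l : T) : Prop := cof_omega l.

Definition Bset (A : T -> Prop) (l : T) : Prop :=
  exists s, is_succ l s /\ A s.

Definition club (C : T -> Prop) : Prop :=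
  unbounded C /\
  (forall l, is_limit l ->
     (forall a, lt a l -> exists c, C c /\ lt a c /\ lt c l) -> C l).

Definition stationary (S : T -> Prop) : Prop :=
  forall C, club C -> exists x, S x /\ C x.

Definition diag (A : T -> Prop) (X : T -> T -> Prop) (xi : T) : Prop :=
  exists a, lt a xi /\ A a /\ X a xi.

Definition is_ideal (J : (T -> Prop) -> Prop) : Prop :=
  (forall X Y, J Y -> (forall x, X x -> Y x) -> J X) /\
  (forall X Y, J X -> J Y -> J (fun x => X x \/ Y x)) /\
  (forall (D : T -> Prop) (F : T -> T -> Prop), card_lt_kappa D ->
     (forall a, D a -> J (F a)) -> J (fun x => exists a, D a /\ F a x)) /\
  (forall a, J (fun x => x = a)).

Definition gen_ideal (G : (T -> Prop) -> Prop) (X : T -> Prop) : Prop :=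
  forall J, is_ideal J -> (forall Y, G Y -> J Y) -> J X.

Definition Ikappa (X : T -> Prop) : Prop := card_lt_kappa X.

Definition Iideal : (T -> Prop) -> Prop :=
  gen_ideal (fun Y => Ikappa Y \/ (forall x, Y x <-> Wset x)).

(* P(I) = union of the stages P_beta(I); equivalently the least ideal
   containing I and closed under diagonal unions indexed by sets in I
   of families of its members. *)
Definition pleasant_closure (I : (T -> Prop) -> Prop) (X : T -> Prop) : Prop :=
  forall J, is_ideal J -> (forall Y, I Y -> J Y) ->
    (forall (A : T -> Prop) (F : T -> T -> Prop), I A ->
       (forall a, A a -> J (F a)) -> J (diag A F)) ->
    J X.

End KappaDefs.

(* Let J be the family of X whose trace {l not in W : l + 1 in X} is nonstationary.  J is an
   ideal containing I_kappa and W.  It is also closed under diagonal unions indexed by sets of I: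
   such an index set lies inside W up to a bounded part, so above that bound a point l + 1 with
   l not in W can enter the diagonal union only through some index a < l, and the diagonal
   intersection of the clubs witnessing X_a in J (a club, by regularity and uncountability)
   excludes that.  Hence P(I) is contained in J.  But A avoids the successors of points of W, so
   its trace is all of B(A), which is stationary. *)

From Pilot Require Import Defs.
From Stdlib Require Import Classical ClassicalEpsilon ProofIrrelevance PeanoNat.

Lemma hilbert_hotel (U : Type) (h : nat -> U) (a : U) :
  (forall n m, h n = h m -> n = m) -> (forall n, h n <> a) ->
  exists f : U -> U, (forall x y, f x = f y -> x = y) /\ forall x, f x <> a.
Proof.
  intros Hinj Ha.
  assert (Hg : forall x, exists n, (exists m, x = h m) -> x = h n).
  { intro x. destruct (classic (exists m, x = h m)) as [[m Hm]|N]; [exists m | exists 0]; tauto. }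
  destruct (choice _ Hg) as [g Hg'].
  pose (f x := if excluded_middle_informative (x = a) then h 0
               else if excluded_middle_informative (exists m, x = h m) then h (S (g x))
               else x).
  assert (fa : f a = h 0).
  { unfold f. destruct (excluded_middle_informative (a = a)); tauto. }
  assert (fh : forall n, f (h n) = h (S n)).
  { intro n. unfold f. destruct (excluded_middle_informative (h n = a)) as [E|_]; [destruct (Ha n E)|].
    destruct (excluded_middle_informative (exists m, h n = h m)) as [R|N]; [|destruct N; eauto].
    rewrite <- (Hinj _ _ (Hg' _ R)). reflexivity. }
  assert (fo : forall x, x <> a -> (forall n, x <> h n) -> f x = x).
  { intros x Hxa Hxh. unfold f.
    destruct (excluded_middle_informative (x = a)); [contradiction|].
    destruct (excluded_middle_informative (exists m, x = h m)) as [[m E]|]; [destruct (Hxh m E)|auto]. }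
  assert (kinds : forall x, x = a \/ (exists n, x = h n) \/ (x <> a /\ forall n, x <> h n)).
  { intro x. destruct (classic (x = a)); [auto|].
    destruct (classic (exists n, x = h n)) as [|N]; [auto|].
    right; right; split; [auto|]. intros n E. eauto. }
  exists f. split.
  - intros x y E.
    destruct (kinds x) as [->|[[n ->]|[xa xh]]]; destruct (kinds y) as [->|[[m ->]|[ya yh]]];
      rewrite ?fa, ?fh, ?(fo x xa xh), ?(fo y ya yh) in E;
      try apply Hinj in E; try congruence.
  - intro x. destruct (kinds x) as [->|[[n ->]|[xa xh]]]; rewrite ?fa, ?fh, ?(fo x xa xh); auto.
Qed.

Lemma sig_eq (U : Type) (P : U -> Prop) (u v : {x | P x}) : proj1_sig u = proj1_sig v -> u = v.
Proof. destruct u, v. simpl. intro. apply subset_eq_compat. assumption. Qed.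

Section RegularCardinal.

Variable T : Type.
Variable lt : T -> T -> Prop.
Hypothesis lt_irrefl : forall a, ~ lt a a.
Hypothesis lt_trans : forall a b c, lt a b -> lt b c -> lt a c.
Hypothesis lt_total : forall a b, lt a b \/ a = b \/ lt b a.
Hypothesis lt_wf : well_founded lt.
Hypothesis initial_segment_small : forall a, card_lt_kappa T (fun x => lt x a).
Hypothesis uncountable : ~ exists f : T -> nat, forall a b, f a = f b -> a = b.
Hypothesis regular : forall X, unbounded T lt X -> ~ card_lt_kappa T X.

Local Notation le := (Defs.le T lt).
Local Notation club := (club T lt).

Lemma le_lt_trans a b c : le a b -> lt b c -> lt a c.
Proof. intros [H|<-] H'; eauto. Qed.

Lemma lt_le_trans a b c : lt a b -> le b c -> lt a c.
Proof. intros H [H'|<-]; eauto. Qed.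

Lemma lt_le_asym a b : lt a b -> ~ le b a.
Proof. intros H [H'|E]; [apply (lt_irrefl a); eauto | subst; exact (lt_irrefl _ H)]. Qed.

Lemma not_lt_le a b : ~ lt a b -> le b a.
Proof. intro H; destruct (lt_total a b) as [|[->|]]; [contradiction|right|left]; auto. Qed.

Lemma le_antisym a b : le a b -> le b a -> a = b.
Proof. intros [H|] H'; [destruct (lt_le_asym _ _ H H')|]; auto. Qed.

Lemma le_max_lt a a' l : lt a l -> lt a' l -> exists m, le a m /\ le a' m /\ lt m l.
Proof.
  intros H H'. destruct (lt_total a a') as [|[->|]].
  - exists a'. split; [left|split; [right|]]; auto.
  - exists a'. split; [right|split; [right|]]; auto.
  - exists a. split; [right|split; [left|]]; auto.
Qed.

Lemma least_elem (P : T -> Prop) : (exists x, P x) -> exists m, P m /\ forall z, P z -> le m z.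
Proof.
  intros [x Px]. induction x as [x IH] using (well_founded_ind lt_wf).
  destruct (classic (exists z, lt z x /\ P z)) as [[z [Hz Pz]]|N].
  - exact (IH z Hz Pz).
  - exists x. split; [exact Px|]. intros z Pz. apply not_lt_le. eauto.
Qed.

Lemma T_inhabited : inhabited T.
Proof.
  apply NNPP. intro N. apply uncountable. exists (fun _ => 0).
  intro a. destruct (N (inhabits a)).
Qed.

Lemma nat_not_onto : ~ exists h : nat -> T, forall y, exists n, h n = y.
Proof.
  intros [h Hh]. destruct (choice _ Hh) as [g Hg]. apply uncountable.
  exists g. intros a b E. rewrite <- (Hg a), <- (Hg b), E. reflexivity.
Qed.

Definition increasing (x : nat -> T) : Prop := forall n, lt (x n) (x (S n)).

Lemma increasing_lt x : increasing x -> forall n k, (n < k)%nat -> lt (x n) (x k).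
Proof.
  intros Hx n k Hnk. induction Hnk; [apply Hx|]. eauto.
Qed.

Lemma increasing_injective x : increasing x -> forall n k, x n = x k -> n = k.
Proof.
  intros Hx n k E. destruct (Nat.lt_total n k) as [H|[H|H]]; auto;
    apply (increasing_lt x Hx) in H; rewrite E in H; destruct (lt_irrefl _ H).
Qed.

Lemma iter_succ_covers (sf : T -> T) (m0 : T) :
  (forall x, (exists w, lt x w) -> is_succ T lt x (sf x)) -> (forall z, le m0 z) ->
  forall j y, le y (Nat.iter j sf m0) -> exists i, Nat.iter i sf m0 = y.
Proof.
  intros Hsf Hm0 j. induction j as [|j IH]; intros y Hy.
  - exists 0. apply le_antisym; auto.
  - destruct (classic (lt (Nat.iter j sf m0) y)) as [Hlt|Hge].
    + exists (S j). apply le_antisym; [apply (Hsf _ (ex_intro _ y Hlt)); exact Hlt | exact Hy].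
    + apply IH, not_lt_le, Hge.
Qed.

(* If a were the largest element, the successor iterates h n of the least element either reach a,
   and then enumerate T, or stay below a, and then the Hilbert hotel injects T into {x < a}. *)
Lemma no_maximum a : exists b, lt a b.
Proof.
  apply NNPP. intro N.
  assert (Hmax : forall x, le x a) by (intro x; apply not_lt_le; eauto).
  destruct (least_elem (fun _ => True) (ex_intro _ a I)) as [m0 [_ Hm0]].
  assert (Hsf : forall x, exists y, (exists w, lt x w) -> is_succ T lt x y).
  { intro x. destruct (classic (exists w, lt x w)) as [Hw|Hw]; [|exists x; tauto].
    destruct (least_elem _ Hw) as [y [Hy Hmin]]. exists y. split; auto. }
  destruct (choice _ Hsf) as [sf Hsf'].
  pose (h n := Nat.iter n sf m0).
  destruct (classic (exists n, h n = a)) as [[n Hn]|Hna].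
  - apply nat_not_onto. exists h. intro y.
    apply (iter_succ_covers sf m0 Hsf' (fun z => Hm0 z I) n).
    change (le y (h n)). rewrite Hn. apply Hmax.
  - assert (Hlt : forall n, lt (h n) a).
    { intro n. destruct (Hmax (h n)) as [|E]; [auto | destruct Hna; eauto]. }
    assert (Hinc : increasing h) by (intro n; apply (Hsf' (h n)); eauto).
    destruct (hilbert_hotel T h a (increasing_injective h Hinc)) as [f [Hf Hfa]]; [eauto|].
    apply (initial_segment_small a).
    assert (Hfl : forall x, lt (f x) a).
    { intro x. destruct (Hmax (f x)) as [|E]; [auto | destruct (Hfa x E)]. }
    exists (fun x => exist _ (f x) (Hfl x)).
    intros x y E. apply Hf. exact (f_equal (@proj1_sig _ _) E).
Qed.

Lemma upper_bound2 a b : exists c, lt a c /\ lt b c.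
Proof.
  destruct (lt_total a b) as [H|[<-|H]].
  - destruct (no_maximum b) as [c Hc]. eauto.
  - destruct (no_maximum a) as [c Hc]. eauto.
  - destruct (no_maximum a) as [c Hc]. eauto.
Qed.

Lemma nat_range_small (h : nat -> T) : card_lt_kappa T (fun y => exists n, h n = y).
Proof.
  intros [f Hf]. destruct (choice _ (fun t => proj2_sig (f t))) as [g Hg].
  apply uncountable. exists g. intros a b E. apply Hf, sig_eq.
  rewrite <- (Hg a), <- (Hg b), E. reflexivity.
Qed.

Lemma image_small (D : T -> Prop) (g : T -> T) :
  card_lt_kappa T D -> card_lt_kappa T (fun y => exists a, D a /\ g a = y).
Proof.
  intros HD [f Hf]. destruct (choice _ (fun t => proj2_sig (f t))) as [p Hp].
  apply HD. exists (fun t => exist D (p t) (proj1 (Hp t))).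
  intros a b E. apply (f_equal (@proj1_sig _ _)) in E. simpl in E.
  apply Hf, sig_eq. rewrite <- (proj2 (Hp a)), <- (proj2 (Hp b)), E. reflexivity.
Qed.

Lemma small_bounded X : card_lt_kappa T X -> exists u, forall x, X x -> le x u.
Proof.
  intro HX. destruct (classic (unbounded T lt X)) as [U|U]; [destruct (regular X U HX)|].
  apply not_all_ex_not in U as [u Hu]. exists u. intros x Xx. apply not_lt_le. eauto.
Qed.

Lemma small_family_bound (D : T -> Prop) (g : T -> T) :
  card_lt_kappa T D -> exists u, forall a, D a -> lt (g a) u.
Proof.
  intro HD. destruct (small_bounded _ (image_small D g HD)) as [u0 Hu0].
  destruct (no_maximum u0) as [u Hu]. exists u. intros a Da.
  apply le_lt_trans with u0; eauto.
Qed.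

Lemma increasing_sup (x : nat -> T) : increasing x ->
  exists s, is_limit T lt s /\ (forall n, lt (x n) s) /\ (forall a, lt a s -> exists n, lt a (x n)).
Proof.
  intro Hx. destruct (small_bounded _ (nat_range_small x)) as [u Hu].
  destruct (least_elem (fun z => forall n, le (x n) z)) as [s [Hub Hleast]]; [eauto|].
  assert (Hbelow : forall n, lt (x n) s) by (intro n; apply lt_le_trans with (x (S n)); auto).
  assert (Hcof : forall a, lt a s -> exists n, lt a (x n)).
  { intros a Ha. apply NNPP. intro N. apply (lt_le_asym _ _ Ha), Hleast.
    intro n. apply not_lt_le. eauto. }
  exists s. split; [split|split]; auto.
  - exists (x 0). auto.
  - intros a Ha. destruct (Hcof a Ha) as [n Hn]. eauto.
Qed.

Definition diag_inter (C : T -> T -> Prop) (b : T) (x : T) : Prop :=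
  lt b x /\ forall a, lt a x -> C a x.

Lemma diag_inter_unbounded C b : (forall a, club (C a)) -> unbounded T lt (diag_inter C b).
Proof.
  intros HC c.
  assert (Hstep : forall y, exists z, lt y z /\
            forall a, lt a y -> exists e, C a e /\ lt y e /\ lt e z).
  { intro y. destruct (choice _ (fun a => proj1 (HC a) y)) as [g Hg].
    destruct (small_family_bound _ g (initial_segment_small y)) as [u Hu].
    destruct (upper_bound2 u y) as [z [Huz Hyz]]. exists z. split; [exact Hyz|].
    intros a Ha. exists (g a). destruct (Hg a). eauto. }
  destruct (choice _ Hstep) as [st Hst].
  destruct (upper_bound2 b c) as [x0 [Hb Hc]].
  pose (x n := Nat.iter n st x0).
  assert (Hinc : increasing x) by (intro n; apply (Hst (x n))).
  destruct (increasing_sup x Hinc) as [s [Hlim [Hbelow Hcof]]].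
  exists s. split; [split|].
  - exact (lt_trans _ _ _ Hb (Hbelow 0)).
  - (* C a meets each interval (x n, x (S n)) with a < x n, so it is unbounded below s *)
    intros a Ha. apply (proj2 (HC a) s Hlim). intros a' Ha'.
    destruct (le_max_lt a a' s Ha Ha') as [m [Ham [Ha'm Hms]]].
    destruct (Hcof m Hms) as [n Hn].
    destruct (proj2 (Hst (x n)) a (le_lt_trans _ _ _ Ham Hn)) as [e [He [Hne Hen]]].
    exists e. split; [exact He|split].
    + apply le_lt_trans with m; eauto.
    + apply lt_trans with (x (S n)); auto.
  - exact (lt_trans _ _ _ Hc (Hbelow 0)).
Qed.

Lemma club_diag_inter C b : (forall a, club (C a)) -> club (diag_inter C b).
Proof.
  intro HC. split; [exact (diag_inter_unbounded C b HC)|].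
  intros l Hl Hcof. pose proof Hl as [[a0 Ha0] _]. split.
  - destruct (Hcof a0 Ha0) as [e [[Hbe _] [_ Hel]]]. eauto.
  - intros a Ha. apply (proj2 (HC a) l Hl). intros a' Ha'.
    destruct (le_max_lt a a' l Ha Ha') as [m [Ham [Ha'm Hml]]].
    destruct (Hcof m Hml) as [e [[_ He] [Hme Hel]]].
    exists e. split; [|split]; [apply He| |exact Hel]; eapply le_lt_trans; eauto.
Qed.

Lemma club_full : club (fun _ => True).
Proof. split; [intro a; destruct (no_maximum a); eauto | auto]. Qed.

Definition nonstationary (S : T -> Prop) : Prop := exists C, club C /\ forall x, C x -> ~ S x.

Lemma choose_disjoint_clubs (D : T -> Prop) (S : T -> T -> Prop) :
  (forall a, D a -> nonstationary (S a)) ->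
  exists C : T -> T -> Prop, forall a, club (C a) /\ (D a -> forall x, C a x -> ~ S a x).
Proof.
  intro H. apply (choice (fun a C => club C /\ (D a -> forall x, C x -> ~ S a x))).
  intro a. destruct (classic (D a)) as [Da|Da].
  - destruct (H a Da) as [C HC]. exists C. tauto.
  - exists (fun _ => True). split; [exact club_full | tauto].
Qed.

Lemma club_tail b : club (fun x => lt b x).
Proof.
  split.
  - intro a. destruct (upper_bound2 a b) as [c [Hac Hbc]]. eauto.
  - intros l [[a0 Ha0] _] Hcof. destruct (Hcof a0 Ha0) as [c [Hbc [_ Hcl]]]. eauto.
Qed.

Lemma succ_not_cof_omega l s : is_succ T lt l s -> ~ Wset T lt s.
Proof.
  intros [Hls Hmin] [f [_ [Hf Hcof]]]. destruct (Hcof l Hls) as [n Hn].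
  exact (lt_le_asym _ _ (Hf n) (Hmin _ Hn)).
Qed.

(* Binary unions are small unions: index X by a0 and Y by a1 inside the initial segment below a2. *)
Lemma is_ideal_of_small_unions (J : (T -> Prop) -> Prop) :
  (forall X Y, J Y -> (forall x, X x -> Y x) -> J X) ->
  (forall (D : T -> Prop) (F : T -> T -> Prop), card_lt_kappa T D ->
     (forall a, D a -> J (F a)) -> J (fun x => exists a, D a /\ F a x)) ->
  (forall a, J (fun x => x = a)) ->
  is_ideal T J.
Proof.
  intros Hsub Hunion Hsing. split; [exact Hsub | split; [|auto]].
  intros X Y HX HY. destruct T_inhabited as [a0].
  destruct (no_maximum a0) as [a1 H01]. destruct (no_maximum a1) as [a2 H12].
  apply Hsub with (fun x => exists a, lt a a2 /\ ((a = a0 /\ X x) \/ (a <> a0 /\ Y x))).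
  - apply Hunion; [apply initial_segment_small|]. intros a _.
    destruct (classic (a = a0)); [apply Hsub with X | apply Hsub with Y]; tauto.
  - intros x [Xx|Yx]; [exists a0 | exists a1]; split; eauto.
    right. split; [|exact Yx]. intros ->. exact (lt_irrefl _ H01).
Qed.

Definition bounded_off_W (X : T -> Prop) : Prop :=
  exists d, forall x, X x -> Wset T lt x \/ le x d.

Lemma bounded_off_W_ideal : is_ideal T bounded_off_W.
Proof.
  apply is_ideal_of_small_unions.
  - intros X Y [d Hd] HXY. exists d. auto.
  - intros D F HD HF.
    destruct (choice (fun a d => D a -> forall x, F a x -> Wset T lt x \/ le x d)) as [g Hg].
    { intro a. destruct (classic (D a)) as [Da|Da]; [destruct (HF a Da) as [d Hd]; exists d | exists a]; tauto. }
    destruct (small_family_bound D g HD) as [u Hu]. exists u. intros x [a [Da Fx]].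
    destruct (Hg a Da x Fx) as [|Hle]; [auto | right; left; eapply le_lt_trans; eauto].
  - intro a. exists a. intros x ->. right; right; reflexivity.
Qed.

Lemma Iideal_bounded_off_W X : Iideal T lt X -> bounded_off_W X.
Proof.
  intro HX. apply HX; [exact bounded_off_W_ideal|]. intros Y [HY|HY].
  - destruct (small_bounded Y HY) as [u Hu]. exists u. auto.
  - destruct T_inhabited as [t]. exists t. intros x Yx. left. apply HY, Yx.
Qed.

Definition nonstationary_off_W (X : T -> Prop) : Prop :=
  nonstationary (fun l => ~ Wset T lt l /\ Bset T lt X l).

Lemma nonstationary_off_W_ideal : is_ideal T nonstationary_off_W.
Proof.
  apply is_ideal_of_small_unions.
  - intros X Y [C [HC HY]] HXY. exists C. split; [exact HC|].
    intros l Cl [HW [s [Hs Xs]]]. apply (HY l Cl). split; [|exists s]; auto.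
  - intros D F HD HF.
    destruct (choose_disjoint_clubs D (fun a l => ~ Wset T lt l /\ Bset T lt (F a) l) HF) as [C HC].
    destruct (small_bounded D HD) as [d Hd].
    exists (diag_inter C d). split; [apply club_diag_inter; apply HC|].
    intros l [Hdl Hl] [HW [s [Hs [a [Da Fas]]]]].
    apply (proj2 (HC a) Da l (Hl a (le_lt_trans _ _ _ (Hd a Da) Hdl))). split; [|exists s]; auto.
  - intro a. exists (fun x => lt a x). split; [exact (club_tail a)|].
    intros l Hal [_ [s [[Hls _] ->]]]. apply (lt_irrefl a). eauto.
Qed.

Lemma Iideal_nonstationary_off_W X : Iideal T lt X -> nonstationary_off_W X.
Proof.
  intro HX. apply HX; [exact nonstationary_off_W_ideal|]. intros Y [HY|HY].
  - destruct (small_bounded Y HY) as [u Hu]. exists (fun x => lt u x). split; [exact (club_tail u)|].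
    intros l Hul [_ [s [[Hls _] Ys]]]. exact (lt_le_asym _ _ (lt_trans _ _ _ Hul Hls) (Hu s Ys)).
  - exists (fun _ => True). split; [exact club_full|].
    intros l _ [_ [s [Hs Ys]]]. apply (succ_not_cof_omega l s Hs), HY, Ys.
Qed.

Lemma nonstationary_off_W_diag (A : T -> Prop) (F : T -> T -> Prop) :
  Iideal T lt A -> (forall a, A a -> nonstationary_off_W (F a)) ->
  nonstationary_off_W (diag T lt A F).
Proof.
  intros HA HF. destruct (Iideal_bounded_off_W A HA) as [d Hd].
  destruct (choose_disjoint_clubs A (fun a l => ~ Wset T lt l /\ Bset T lt (F a) l) HF) as [C HC].
  exists (diag_inter C d). split; [apply club_diag_inter; apply HC|].
  intros l [Hdl Hl] [HW [s [Hs [a [Has [Aa Fas]]]]]].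
  (* a < l + 1, so a <= l; the index a = l is excluded since l > d and l is not in W *)
  destruct (lt_total a l) as [Hal|[->|Hla]].
  - apply (proj2 (HC a) Aa l (Hl a Hal)). split; [|exists s]; auto.
  - destruct (Hd l Aa) as [|Hle]; [contradiction | exact (lt_le_asym _ _ Hdl Hle)].
  - exact (lt_le_asym _ _ Has (proj2 Hs a Hla)).
Qed.

Lemma pleasant_closure_nonstationary_off_W X :
  pleasant_closure T lt (Iideal T lt) X -> nonstationary_off_W X.
Proof.
  intro HX. apply HX.
  - exact nonstationary_off_W_ideal.
  - exact Iideal_nonstationary_off_W.
  - exact nonstationary_off_W_diag.
Qed.

End RegularCardinal.

Theorem theorem3p13 (T : Type) (lt : T -> T -> Prop)
  (Hk : regular_uncountable_cardinal T lt)
  (A : T -> Prop)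
  (HA : forall x, A x ->
          Lset T lt x /\ ~ (exists l, Wset T lt l /\ is_succ T lt l x))
  (HB : stationary T lt (Bset T lt A)) :
  ~ pleasant_closure T lt (Iideal T lt) A.
Proof.
  destruct Hk as (irr & trans & total & wf & seg_small & uncount & reg).
  intro HP.
  destruct (pleasant_closure_nonstationary_off_W T lt irr trans total wf seg_small uncount reg A HP)
    as [C [HC Hdisj]].
  destruct (HB C HC) as [l [[s [Hs As]] Cl]].
  apply (Hdisj l Cl). split; [|exists s; auto].
  intro Wl. apply (proj2 (HA s As)). eauto.
Qed.
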